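(* Let $\mathcal{C}$ be an essentially small, concrete, abelian category. For any two constructible persistence modules $F,G\in\mathsf{Pmod}(\mathcal{C})$, $$d_E(F_B,G_B)\le d_I(F,G).$$
   Context: A persistence module is a functor $F:(\mathbb{R},\le)\to\mathcal{C}$. For finite $S=\{s_1<\dots<s_n\}$, $F$ is $S$-constructible if $F(p\le q)$ is the identity on the zero object for $p\le q<s_1$, an isomorphism for $s_i\le p\le q<s_{i+1}$, and an isomorphism for $s_n\le p\le q$; $\mathsf{Pmod}(\mathcal{C})$ consists of modules constructible w.r.t. some finite $S$. Interleaving distance: $\Delta^\varepsilon(F)=F\circ\mathsf{Shift}^\varepsilon$ with $\mathsf{Shift}^\varepsilon(r)=r+\varepsilon$; $\sigma^\varepsilon_F:F\to\Delta^\varepsilon F$ has components $F(r\le r+\varepsilon)$. $F,G$ are $\varepsilon$-interleaved if there exist $\phi:F\to\Delta^\varepsilon G$, $\psi:G\to\Delta^\varepsilon F$ with $\Delta^\varepsilon(\psi)\circ\phi=\sigma^{2\varepsilon}_F$, $\Delta^\varepsilon(\phi)\circ\psi=\sigma^{2\varepsilon}_G$; $d_I(F,G)$ is the minimal such $\varepsilon\ge0$ ($\infty$ if none). $\mathsf{Dgm}$ is the poset of intervals $[q,r)$ ($q<r$) and $[q,\infty)$ under containment. $A(\mathcal{C})$ is the group completion of the monoid of isomorphism classes under $\oplus$; $B(\mathcal{C})$ is $A(\mathcal{C})$ modulo $[b]=[a]+[c]$ for each short exact sequence $0\to a\to b\to c\to0$, with quotient $\pi$; on $B(\mathcal{C})$,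 $x\preceq y$ iff $y-x\in\pi(\{[a]\})$. Type $B$ diagram of $S$-constructible $F$: $dF_B:\mathsf{Dgm}\to B(\mathcal{C})$ is $\pi$ of: $[\operatorname{im}F(p\le s_i-\delta)]$ on $[p,s_i)$ for any $\delta>0$ with $\max(p,s_{i-1})\le s_i-\delta$ ($s_0=-\infty$); $[\operatorname{im}F(p\le s')]$ on $[p,\infty)$ for any $s'>\max(p,s_n)$; $[\operatorname{im}F(p\le q)]$ on all other $[p,q)$. $F_B$ is its Möbius inversion: $F_B([s_i,s_j))=dF_B([s_i,s_j))-dF_B([s_i,s_{j+1}))+dF_B([s_{i-1},s_{j+1}))-dF_B([s_{i-1},s_j))$, $F_B([s_i,\infty))=dF_B([s_i,\infty))-dF_B([s_{i-1},\infty))$ ($s_0$ any value $<s_1$, $s_{n+1}$ any value $>s_n$), zero elsewhere. Persistence diagrams: maps $Y:\mathsf{Dgm}\to B(\mathcal{C})$ nonzero only on intervals with endpoints in some finite set. A morphism $Y_1\to Y_2$ exists iff $\sum_{J\supseteq I}Y_1(J)\preceq\sum_{J\supseteq I}Y_2(J)$ for each $I$ with $Y_1(I)\ne0$. $\nabla^\varepsilon(Y)=Y\circ\mathsf{Grow}^\varepsilon$ where $\mathsf{Grow}^\varepsilon([p,q))=[p-\varepsilon,q+\varepsilon)$, $\mathsf{Grow}^\varepsilon([p,\infty))=[p-\varepsilon,\infty)$. An $\varepsilon$-erosion between $Y_1,Y_2$ is a pair of morphisms $\nabla^\varepsilon(Y_2)\to Y_1$ and $\nabla^\varepsilon(Y_1)\to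 Y_2$; the erosion distance $d_E(Y_1,Y_2)$ is the minimal $\varepsilon\ge0$ admitting an $\varepsilon$-erosion ($\infty$ if none). *)

From Stdlib Require Import Bool Reals ZArith List ClassicalEpsilon.
From Coquelicot Require Import Coquelicot.
Import ListNotations.
Open Scope bool_scope.
Set Implicit Arguments.
Open Scope R_scope.

Record AbelianCat := {
  Ob : Type;
  Hom : Ob -> Ob -> Type;
  idm : forall a, Hom a a;
  comp : forall a b c, Hom b c -> Hom a b -> Hom a c;
  comp_idl : forall a b (f : Hom a b), comp (idm b) f = f;
  comp_idr : forall a b (f : Hom a b), comp f (idm a) = f;
  comp_assoc : forall a b c d (f : Hom a b) (g : Hom b c) (h : Hom c d),
      comp h (comp g f) = comp (comp h g) f;
  hadd : forall a b, Hom a b -> Hom a b -> Hom a b;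
  hzero : forall a b, Hom a b;
  hneg : forall a b, Hom a b -> Hom a b;
  hadd_assoc : forall a b (f g h : Hom a b), hadd f (hadd g h) = hadd (hadd f g) h;
  hadd_comm : forall a b (f g : Hom a b), hadd f g = hadd g f;
  hadd_0 : forall a b (f : Hom a b), hadd (hzero a b) f = f;
  hadd_neg : forall a b (f : Hom a b), hadd (hneg f) f = hzero a b;
  comp_addl : forall a b c (f : Hom a b) (g h : Hom b c),
      comp (hadd g h) f = hadd (comp g f) (comp h f);
  comp_addr : forall a b c (f g : Hom a b) (h : Hom b c),
      comp h (hadd f g) = hadd (comp h f) (comp h g);
  zero_ex : exists z : Ob,
      forall a, (exists f : Hom z a, forall g, g = f) /\ (exists f : Hom a z, forall g, g = f);
  biprod_ex : forall a b, exists (ab : Ob) (i1 : Hom a ab) (i2 : Hom b ab)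
      (p1 : Hom ab a) (p2 : Hom ab b),
      comp p1 i1 = idm a /\ comp p2 i2 = idm b /\
      comp p1 i2 = hzero b a /\ comp p2 i1 = hzero a b /\
      hadd (comp i1 p1) (comp i2 p2) = idm ab;
  kernel_ex : forall a b (f : Hom a b), exists (K : Ob) (k : Hom K a),
      comp f k = hzero K b /\
      forall X (h : Hom X a), comp f h = hzero X b -> exists! u : Hom X K, comp k u = h;
  cokernel_ex : forall a b (f : Hom a b), exists (Q : Ob) (c : Hom b Q),
      comp c f = hzero a Q /\
      forall X (h : Hom b X), comp h f = hzero a X -> exists! u : Hom Q X, comp u c = h;
  (* every mono is a kernel of its cokernel / every epi a cokernel of its kernel:
     stated below through the predicates, see [abelian_normal] *)
}.

Arguments idm {C} a : rename.
Arguments comp {C a b c} _ _ : rename.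
Arguments hzero {C} a b : rename.

Section CatDefs.
Variable C : AbelianCat.

Definition mono a b (m : Hom C a b) : Prop :=
  forall X (g h : Hom C X a), comp m g = comp m h -> g = h.
Definition epi a b (e : Hom C a b) : Prop :=
  forall X (g h : Hom C b X), comp g e = comp h e -> g = h.
Definition is_iso a b (f : Hom C a b) : Prop :=
  exists g : Hom C b a, comp g f = idm a /\ comp f g = idm b.
Definition is_zero (z : Ob C) : Prop :=
  forall a, (exists f : Hom C z a, forall g, g = f) /\ (exists f : Hom C a z, forall g, g = f).
Definition is_kernel a b (f : Hom C a b) K (k : Hom C K a) : Prop :=
  comp f k = hzero K b /\
  forall X (h : Hom C X a), comp f h = hzero X b -> exists! u : Hom C X K, comp k u = h.
Definition is_cokernel a b (f : Hom C a b) Q (c : Hom C b Q) : Prop :=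
  comp c f = hzero a Q /\
  forall X (h : Hom C b X), comp h f = hzero a X -> exists! u : Hom C Q X, comp u c = h.
End CatDefs.
Arguments mono {C a b} m.
Arguments epi {C a b} e.
Arguments is_iso {C a b} f.
Arguments is_zero {C} z.
Arguments is_kernel {C a b} f {K} k.
Arguments is_cokernel {C a b} f {Q} c.

Definition abelian_normal (C : AbelianCat) : Prop :=
  (forall a b (m : Hom C a b), mono m ->
     exists Q (c : Hom C b Q), is_cokernel m c /\ is_kernel c m) /\
  (forall a b (e : Hom C a b), epi e ->
     exists K (k : Hom C K a), is_kernel e k /\ is_cokernel k e).

Definition concrete (C : AbelianCat) : Prop :=
  exists (U : Ob C -> Type) (Um : forall a b, Hom C a b -> U a -> U b),
    (forall a x, Um a a (idm a) x = x) /\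
    (forall a b c (f : Hom C a b) (g : Hom C b c) x, Um a c (comp g f) x = Um b c g (Um a b f x)) /\
    (forall a b (f g : Hom C a b), Um a b f = Um a b g -> f = g).

Definition is_image {C : AbelianCat} {a b} (f : Hom C a b) (I : Ob C) : Prop :=
  exists (e : Hom C a I) (m : Hom C I b), epi e /\ mono m /\ comp m e = f.

(* a chosen image object of f (images exist in an abelian category) *)
Definition im_obj {C : AbelianCat} {a b} (f : Hom C a b) : Ob C :=
  epsilon (inhabits a) (is_image f).

Definition SES {C : AbelianCat} (a b c : Ob C) : Prop :=
  exists (f : Hom C a b) (g : Hom C b c), mono f /\ epi g /\ is_kernel g f.

(* Elements of the free abelian group on objects: formal Z-combinations. *)
Definition Belt (C : AbelianCat) := list (Z * Ob C).

Definition cls {C : AbelianCat} (a : Ob C) : Belt C := [(1%Z, a)].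
Definition Bneg {C : AbelianCat} (x : Belt C) : Belt C :=
  map (fun t => (Z.opp (fst t), snd t)) x.

Definition coeff {C : AbelianCat} (x : Belt C) (o : Ob C) : Z :=
  fold_right (fun t acc =>
      ((if excluded_middle_informative (snd t = o) then fst t else 0%Z) + acc)%Z) 0%Z x.

(* x lies in the subgroup generated by [b]-[a]-[c] for short exact sequences
   (this subgroup contains the isomorphism and direct sum relations, so the
   quotient is B(C) = A(C) / SES-relations) *)
Definition Bnull {C : AbelianCat} (x : Belt C) : Prop :=
  exists gens : list (Z * (Ob C * Ob C * Ob C)),
    List.Forall (fun g => let '(_, (a, b, c)) := g in SES a b c) gens /\
    forall o, coeff x o =
      fold_right (fun g acc => let '(n, (a, b, c)) := g in
         (n * (coeff (cls b) o - coeff (cls a) o - coeff (cls c) o) + acc)%Z) 0%Z gens.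

Definition Beq {C : AbelianCat} (x y : Belt C) : Prop := Bnull (x ++ Bneg y).
Definition Ble {C : AbelianCat} (x y : Belt C) : Prop :=
  exists a : Ob C, Bnull (y ++ Bneg x ++ Bneg (cls a)).

Record PMod (C : AbelianCat) := {
  Fob : R -> Ob C;
  Fmap : forall p q, p <= q -> Hom C (Fob p) (Fob q);
  Fmap_id : forall p (h : p <= p), Fmap h = idm (Fob p);
  Fmap_comp : forall p q r (h1 : p <= q) (h2 : q <= r) (h3 : p <= r),
      Fmap h3 = comp (Fmap h2) (Fmap h1)
}.
Arguments Fob {C} F r : rename.
Arguments Fmap {C} F {p q} h : rename.

Definition constructible {C : AbelianCat} (F : PMod C) (n : nat) (s : nat -> R) : Prop :=
  (1 <= n)%nat /\
  (forall i, (1 <= i)%nat -> (i < n)%nat -> s i < s (S i)) /\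
  (forall p, p < s 1%nat -> is_zero (Fob F p)) /\
  (forall i, (1 <= i)%nat -> (i < n)%nat ->
     forall p q (h : p <= q), s i <= p -> q < s (S i) -> is_iso (Fmap F h)) /\
  (forall p q (h : p <= q), s n <= p -> is_iso (Fmap F h)).

Definition interleaved {C : AbelianCat} (F G : PMod C) (eps : R) : Prop :=
  exists (phi : forall r, Hom C (Fob F r) (Fob G (r + eps)))
         (psi : forall r, Hom C (Fob G r) (Fob F (r + eps))),
    (forall r s (h : r <= s) (h' : r + eps <= s + eps),
        comp (Fmap G h') (phi r) = comp (phi s) (Fmap F h)) /\
    (forall r s (h : r <= s) (h' : r + eps <= s + eps),
        comp (Fmap F h') (psi r) = comp (psi s) (Fmap G h)) /\
    (forall r (h : r <= r + eps + eps), comp (psi (r + eps)) (phi r) = Fmap F h) /\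
    (forall r (h : r <= r + eps + eps), comp (phi (r + eps)) (psi r) = Fmap G h).

(* minimal eps >= 0 (infimum in the extended reals; +oo if none) *)
Definition d_I {C : AbelianCat} (F G : PMod C) : Rbar :=
  Glb_Rbar (fun eps => 0 <= eps /\ interleaved F G eps).

(* Fin p q = [p, q),  Inf p = [p, oo) *)
Inductive interval := Fin (p q : R) | Inf (p : R).

Definition valid (I : interval) : Prop :=
  match I with Fin p q => p < q | Inf _ => True end.

Definition leb (x y : R) : bool := if Rle_dec x y then true else false.
Definition ltb (x y : R) : bool := if Rlt_dec x y then true else false.
Definition eqb (x y : R) : bool := if Req_EM_T x y then true else false.

Definition validb (I : interval) : bool :=
  match I with Fin p q => ltb p q | Inf _ => true end.

(* containsb J I = (J contains I) *)
Definition containsb (J I : interval) : bool :=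
  match J, I with
  | Fin a b, Fin c d => leb a c && leb d b
  | Fin _ _, Inf _ => false
  | Inf a, Fin c _ => leb a c
  | Inf a, Inf c => leb a c
  end.

Definition diagram (C : AbelianCat) := interval -> Belt C.

Definition fin_supp {C : AbelianCat} (Y : diagram C) (L : list interval) : Prop :=
  NoDup L /\ forall J, valid J -> ~ In J L -> Bnull (Y J).

Definition upsum {C : AbelianCat} (Y : diagram C) (L : list interval) (I : interval) : Belt C :=
  flat_map (fun J => if validb J && containsb J I then Y J else []) L.

(* a morphism Y1 -> Y2 exists *)
Definition diag_mor {C : AbelianCat} (Y1 Y2 : diagram C) : Prop :=
  exists L1 L2, fin_supp Y1 L1 /\ fin_supp Y2 L2 /\
    forall I, valid I -> ~ Bnull (Y1 I) -> Ble (upsum Y1 L1 I) (upsum Y2 L2 I).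

Definition Grow (eps : R) (I : interval) : interval :=
  match I with Fin p q => Fin (p - eps) (q + eps) | Inf p => Inf (p - eps) end.

Definition nabla {C : AbelianCat} (eps : R) (Y : diagram C) : diagram C :=
  fun I => Y (Grow eps I).

Definition eroded {C : AbelianCat} (Y1 Y2 : diagram C) (eps : R) : Prop :=
  diag_mor (nabla eps Y2) Y1 /\ diag_mor (nabla eps Y1) Y2.

Definition d_E {C : AbelianCat} (Y1 Y2 : diagram C) : Rbar :=
  Glb_Rbar (fun eps => 0 <= eps /\ eroded Y1 Y2 eps).

(* [im F(p <= q)] (empty combination if p > q: never used on valid intervals) *)
Definition imc {C : AbelianCat} (F : PMod C) (p q : R) : Belt C :=
  match Rle_dec p q with
  | left h => cls (im_obj (Fmap F h))
  | right _ => []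
  end.

Fixpoint find_idx (s : nat -> R) (q : R) (k : nat) : option nat :=
  match k with
  | O => None
  | S k' => if Req_EM_T q (s k) then Some k else find_idx s q k'
  end.

(* max(p, s_{i-1}) with s_0 = -oo *)
Definition prev_bound (s : nat -> R) (i : nat) (p : R) : R :=
  if Nat.eqb i 1 then p else Rmax p (s (pred i)).

(* dF_B; for [p, s_i) we take delta = (s_i - max(p,s_{i-1}))/2, and for
   [p, oo) we take s' = max(p, s_n) + 1 *)
Definition dFB {C : AbelianCat} (F : PMod C) (n : nat) (s : nat -> R) (I : interval) : Belt C :=
  match I with
  | Fin p q =>
      match find_idx s q n with
      | Some i => imc F p ((prev_bound s i p + s i) / 2)
      | None => imc F p q
      end
  | Inf p => imc F p (Rmax p (s n) + 1)
  end.

Definition sx (n : nat) (s : nat -> R) (i : nat) : R :=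
  if Nat.eqb i 0 then s 1%nat - 1
  else if Nat.eqb i (S n) then s n + 1 else s i.

(* F_B: Möbius inversion of dF_B *)
Definition FB {C : AbelianCat} (F : PMod C) (n : nat) (s : nat -> R) : diagram C :=
  fun I =>
  match I with
  | Fin p q =>
      flat_map (fun i =>
        flat_map (fun j =>
          if eqb p (s i) && eqb q (s j) then
            dFB F n s (Fin (sx n s i) (sx n s j))
            ++ Bneg (dFB F n s (Fin (sx n s i) (sx n s (S j))))
            ++ dFB F n s (Fin (sx n s (pred i)) (sx n s (S j)))
            ++ Bneg (dFB F n s (Fin (sx n s (pred i)) (sx n s j)))
          else []) (seq (S i) (n - i)))
        (seq 1 n)
  | Inf p =>
      flat_map (fun i =>
        if eqb p (s i) then
          dFB F n s (Inf (s i)) ++ Bneg (dFB F n s (Inf (sx n s (pred i))))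
        else []) (seq 1 n)
  end.

(* For constructible F, the sum of the Moebius inversion F_B over all intervals containing
   I = [p, q) is the class of [im F(x <= y)] for a map F(x <= y) that agrees with F(p <= u), up to
   isomorphisms on both sides, for every u just below q (every large u if I = [p, oo)).  An
   eps-interleaving factors G(p - eps <= u + eps) through F(p <= u), and in an abelian category,
   if v factors through u then [im v] is a subquotient of [im u], so [im u] - [im v] is the class
   of an object of C.  Hence these upward sums satisfy the morphism condition for
   nabla^eps G_B -> F_B and symmetrically: every interleaving is an erosion. *)

From Stdlib Require Import Reals Bool List Lia Lra ZArith ClassicalEpsilon.
From Coquelicot Require Import Coquelicot.
Import ListNotations.

Local Notation hsum f g := (hadd _ _ _ f g).
Local Notation hopp f := (hneg _ _ _ f).

Section Preadditive.
Context {C : AbelianCat}.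

Lemma hadd_0r a b (f : Hom C a b) : hsum f (hzero a b) = f.
Proof. rewrite hadd_comm. apply hadd_0. Qed.

Lemma hadd_cancel_l {a b} (f g h : Hom C a b) : hsum f g = hsum f h -> g = h.
Proof.
  intro E. assert (E2 : hsum (hopp f) (hsum f g) = hsum (hopp f) (hsum f h)) by now rewrite E.
  now rewrite !hadd_assoc, hadd_neg, !hadd_0 in E2.
Qed.

Lemma comp_0r a b c (f : Hom C b c) : comp f (hzero a b) = hzero a c.
Proof.
  apply (hadd_cancel_l (comp f (hzero a b))).
  now rewrite <- comp_addr, hadd_0, hadd_0r.
Qed.

Lemma comp_0l a b c (f : Hom C a b) : comp (hzero b c) f = hzero a c.
Proof.
  apply (hadd_cancel_l (comp (hzero b c) f)).
  now rewrite <- comp_addl, hadd_0, hadd_0r.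
Qed.

Lemma comp_negr a b c (f : Hom C a b) (m : Hom C b c) : comp m (hopp f) = hopp (comp m f).
Proof.
  apply (hadd_cancel_l (comp m f)).
  rewrite (hadd_comm _ _ _ (comp m f) (hopp (comp m f))), hadd_neg.
  rewrite <- comp_addr, hadd_comm, hadd_neg. apply comp_0r.
Qed.

Lemma mono_of_comp_zero a b (m : Hom C a b) :
  (forall X (g : Hom C X a), comp m g = hzero X b -> g = hzero X a) -> mono m.
Proof.
  intros H X g h E.
  assert (Ez : comp m (hsum g (hopp h)) = hzero X b).
  { rewrite comp_addr, comp_negr, E, hadd_comm. apply hadd_neg. }
  apply H in Ez.
  assert (E3 : hsum (hsum g (hopp h)) h = hsum (hzero X a) h) by now rewrite Ez.
  now rewrite <- hadd_assoc, hadd_neg, hadd_0r, hadd_0 in E3.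
Qed.

Lemma kernel_mono a b (f : Hom C a b) K (k : Hom C K a) : is_kernel f k -> mono k.
Proof.
  intros [Hk Hu] X g h E.
  assert (Z : comp f (comp k g) = hzero X b) by (rewrite comp_assoc, Hk; apply comp_0l).
  destruct (Hu X (comp k g) Z) as [u [_ Uu]].
  transitivity u; [symmetry|]; apply Uu; auto.
Qed.

Lemma cokernel_epi a b (f : Hom C a b) Q (c : Hom C b Q) : is_cokernel f c -> epi c.
Proof.
  intros [Hc Hu] X g h E.
  assert (Z : comp (comp g c) f = hzero a X) by (rewrite <- comp_assoc, Hc; apply comp_0r).
  destruct (Hu X (comp g c) Z) as [u [_ Uu]].
  transitivity u; [symmetry|]; apply Uu; auto.
Qed.

Lemma epi_comp a b c (e1 : Hom C a b) (e2 : Hom C b c) : epi e1 -> epi e2 -> epi (comp e2 e1).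
Proof. intros H1 H2 X g h E. rewrite !comp_assoc in E. apply H2, H1, E. Qed.

Lemma epi_of_section a b (e : Hom C a b) (s : Hom C b a) : comp e s = idm b -> epi e.
Proof.
  intros E X g h Eg.
  now rewrite <- (comp_idr C _ _ g), <- (comp_idr C _ _ h), <- E, !comp_assoc, Eg.
Qed.

Lemma mono_of_retraction a b (m : Hom C a b) (r : Hom C b a) : comp r m = idm a -> mono m.
Proof.
  intros E X g h Eg.
  now rewrite <- (comp_idl C _ _ g), <- (comp_idl C _ _ h), <- E, <- !comp_assoc, Eg.
Qed.

Lemma is_zero_hom_from (z X : Ob C) (g h : Hom C z X) : is_zero z -> g = h.
Proof. intro Hz. destruct (proj1 (Hz X)) as [f Hf]. now rewrite (Hf g), (Hf h). Qed.

Lemma is_zero_hom_to (z X : Ob C) (g h : Hom C X z) : is_zero z -> g = h.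
Proof. intro Hz. destruct (proj2 (Hz X)) as [f Hf]. now rewrite (Hf g), (Hf h). Qed.

Lemma is_zero_of_idm (I : Ob C) : idm I = hzero I I -> is_zero I.
Proof.
  intros id0 X. split.
  - exists (hzero I X). intro g. now rewrite <- (comp_idr C _ _ g), id0, comp_0r.
  - exists (hzero X I). intro g. now rewrite <- (comp_idl C _ _ g), id0, comp_0l.
Qed.

Lemma ses_zero (z : Ob C) : is_zero z -> SES z z z.
Proof.
  intro Hz. exists (idm z), (idm z).
  split; [intros X g h _; now apply is_zero_hom_to|].
  split; [intros X g h _; now apply is_zero_hom_from|].
  split; [now apply is_zero_hom_from|].
  intros X h _. exists h. split; [now apply is_zero_hom_to|]. intros; now apply is_zero_hom_to.
Qed.

Lemma ses_of_epi {a b} (e : Hom C a b) : epi e -> exists K, SES K a b.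
Proof.
  intro He. destruct (kernel_ex C a b e) as [K [k [Hk Hu]]].
  assert (Hker : is_kernel e k) by (split; auto).
  exists K, k, e. split; [eapply kernel_mono; eauto|]. auto.
Qed.

Lemma ses_biprod (a b : Ob C) : exists S, SES a S b.
Proof.
  destruct (biprod_ex C a b) as [S [i1 [i2 [p1 [p2 [E1 [E2 [E3 [E4 E5]]]]]]]]].
  exists S, i1, p2. split; [eapply mono_of_retraction; eauto|].
  split; [eapply epi_of_section; eauto|].
  split; auto. intros X h Hh. exists (comp p1 h). split.
  - rewrite <- (comp_idl C _ _ h) at 2.
    now rewrite <- E5, comp_addl, <- !comp_assoc, Hh, comp_0r, hadd_0r.
  - intros u Hu. apply (mono_of_retraction _ _ _ _ E1).
    now rewrite <- Hu, (comp_assoc _ _ _ _ _ u i1 p1), E1, comp_idl.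
Qed.

End Preadditive.

Section Abelian.
Context {C : AbelianCat}.
Hypothesis hab : abelian_normal C.

Lemma image_exists {a b} (f : Hom C a b) : exists I, is_image f I.
Proof.
  destruct hab as [Hm He].
  destruct (kernel_ex C a b f) as [K [k [Hk Hku]]].
  destruct (cokernel_ex C K a k) as [Q [c [Hc Hcu]]].
  assert (Hcc : is_cokernel k c) by (split; auto).
  destruct (Hcu b f Hk) as [f' [Ef' _]].
  exists Q, c, f'. split; [eapply cokernel_epi; eauto|]. split; [|exact Ef'].
  apply mono_of_comp_zero. intros X g Eg.
  destruct (kernel_ex C Q b f') as [L [j [Hj Hju]]].
  assert (Hjk : is_kernel f' j) by (split; auto).
  destruct (Hju X g Eg) as [u [Eu _]].
  destruct (Hm _ _ j (kernel_mono _ _ _ _ _ Hjk)) as [P [pi [[Hpi0 Hpiu] Hpik]]].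
  destruct (Hpiu b f' Hj) as [f'' [Ef'' _]].
  assert (epc : epi (comp pi c)).
  { apply epi_comp; [eapply cokernel_epi; eauto | eapply cokernel_epi; split; eauto]. }
  destruct (He _ _ _ epc) as [M [l [[Hl0 _] [_ Hlcu]]]].
  (* [f] kills the kernel [l] of [pi o c], so [l] factors through [k] and [c] kills [l]; hence
     [c] factors through [pi o c], i.e. [pi] has a retraction, which forces [j = 0]. *)
  assert (fl : comp f l = hzero M b).
  { rewrite <- Ef', <- Ef'', <- (comp_assoc _ _ _ _ _ c pi f''), <- comp_assoc, Hl0.
    apply comp_0r. }
  destruct (Hku M l fl) as [l' [El' _]].
  assert (cl : comp c l = hzero M Q) by (rewrite <- El', comp_assoc, Hc; apply comp_0l).
  destruct (Hlcu Q c cl) as [r [Er _]].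
  assert (rpi : comp r pi = idm Q).
  { apply (cokernel_epi _ _ _ _ _ Hcc). now rewrite <- comp_assoc, Er, comp_idl. }
  assert (j0 : j = hzero L Q).
  { rewrite <- (comp_idl C _ _ j), <- rpi, <- comp_assoc, Hpi0. apply comp_0r. }
  rewrite <- Eu, j0. apply comp_0l.
Qed.

Lemma im_obj_spec {a b} (f : Hom C a b) : is_image f (im_obj f).
Proof. unfold im_obj. apply epsilon_spec, image_exists. Qed.

Lemma epi_mono_lift {X Y Z W} (e : Hom C X Y) (m : Hom C Z W) (a : Hom C X Z) (b : Hom C Y W) :
  epi e -> mono m -> comp m a = comp b e -> exists d, comp d e = a /\ comp m d = b.
Proof.
  intros He Hm E.
  destruct (proj2 hab _ _ e He) as [K [k [[Hk _] [_ Hcu]]]].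
  assert (ak : comp a k = hzero K Z).
  { apply Hm. now rewrite comp_0r, comp_assoc, E, <- comp_assoc, Hk, comp_0r. }
  destruct (Hcu Z a ak) as [d [Ed _]].
  exists d. split; auto. apply He. now rewrite <- comp_assoc, Ed.
Qed.

Lemma ses_of_mono {a b} (m : Hom C a b) : mono m -> exists Q, SES a b Q.
Proof.
  intro Hm. destruct (proj1 hab _ _ m Hm) as [Q [c [Hc Hk]]].
  exists Q, m, c. split; auto. split; auto. eapply cokernel_epi; eauto.
Qed.

Lemma ses_of_mono_epi {a b} (d : Hom C a b) :
  mono d -> epi d -> exists Q, SES a b Q /\ is_zero Q.
Proof.
  intros Hm He. destruct (proj1 hab _ _ d Hm) as [Q [c [Hc Hk]]].
  assert (ce : epi c) by (eapply cokernel_epi; eauto).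
  assert (c0 : c = hzero b Q) by (apply He; now rewrite (proj1 Hc), comp_0l).
  exists Q. split; [exists d, c; auto|].
  apply is_zero_of_idm, ce. now rewrite comp_idl, c0, comp_0l.
Qed.

Lemma im_obj_zero {z b} (f : Hom C z b) : is_zero z -> is_zero (im_obj f).
Proof.
  intro Hz. destruct (im_obj_spec f) as [e [m [He [Hm E]]]].
  apply is_zero_of_idm, He, is_zero_hom_from, Hz.
Qed.

End Abelian.

Definition zsum {A} (l : list A) (f : A -> Z) : Z := fold_right (fun x acc => (f x + acc)%Z) 0%Z l.

Lemma zsum_app {A} (l1 l2 : list A) f : zsum (l1 ++ l2) f = (zsum l1 f + zsum l2 f)%Z.
Proof. induction l1; simpl; [reflexivity|]. unfold zsum in *; simpl. rewrite IHl1. ring. Qed.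

Section Grothendieck.
Context {C : AbelianCat}.

Definition ses_combination (gens : list (Z * (Ob C * Ob C * Ob C))) (o : Ob C) : Z :=
  fold_right (fun g acc => let '(n, (a, b, c)) := g in
      (n * (coeff (cls b) o - coeff (cls a) o - coeff (cls c) o) + acc)%Z) 0%Z gens.

Lemma ses_combination_app g1 g2 o :
  ses_combination (g1 ++ g2) o = (ses_combination g1 o + ses_combination g2 o)%Z.
Proof.
  induction g1 as [|[n [[a b] c]] g1 IH]; [reflexivity|]. cbn [app].
  unfold ses_combination in *. cbn [fold_right]. rewrite IH. ring.
Qed.

Lemma ses_combination_opp g o :
  ses_combination (map (fun t => (Z.opp (fst t), snd t)) g) o = (- ses_combination g o)%Z.
Proof.
  induction g as [|[n [[a b] c]] g IH]; [reflexivity|]. cbn [map].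
  unfold ses_combination in *. cbn [fold_right fst snd]. rewrite IH. ring.
Qed.

Lemma coeff_app (x y : Belt C) o : coeff (x ++ y) o = (coeff x o + coeff y o)%Z.
Proof. induction x as [|t x IH]; [reflexivity|]. unfold coeff in *. simpl. rewrite IH. ring. Qed.

Lemma coeff_neg (x : Belt C) o : coeff (Bneg x) o = (- coeff x o)%Z.
Proof.
  induction x as [|t x IH]; [reflexivity|]. unfold coeff in *. simpl. rewrite IH.
  destruct (excluded_middle_informative (snd t = o)); ring.
Qed.

Lemma coeff_flat_map {A} (f : A -> Belt C) l o :
  coeff (flat_map f l) o = zsum l (fun x => coeff (f x) o).
Proof. induction l; simpl; [reflexivity|]. now rewrite coeff_app, IHl. Qed.

Lemma Bnull_ext (x y : Belt C) : (forall o, coeff x o = coeff y o) -> Bnull y -> Bnull x.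
Proof. intros E [g [Hg Hs]]. exists g. split; auto. intro o. rewrite E. apply Hs. Qed.

Lemma Bnull_nil : Bnull (@nil (Z * Ob C)).
Proof. exists nil. split; auto. Qed.

Lemma Bnull_app (x y : Belt C) : Bnull x -> Bnull y -> Bnull (x ++ y).
Proof.
  intros [g1 [H1 S1]] [g2 [H2 S2]]. exists (g1 ++ g2). split; [apply Forall_app; auto|].
  intro o. change (coeff (x ++ y) o = ses_combination (g1 ++ g2) o).
  now rewrite ses_combination_app, coeff_app, S1, S2.
Qed.

Lemma Bnull_neg (x : Belt C) : Bnull x -> Bnull (Bneg x).
Proof.
  intros [g [H S]]. exists (map (fun t => (Z.opp (fst t), snd t)) g). split.
  - rewrite Forall_map. eapply Forall_impl; [|exact H]. now intros [n [[a b] c]].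
  - intro o. change (coeff (Bneg x) o = ses_combination (map (fun t => (Z.opp (fst t), snd t)) g) o).
    now rewrite ses_combination_opp, coeff_neg, S.
Qed.

Lemma Bnull_ses (a b c : Ob C) : SES a b c -> Bnull (cls b ++ Bneg (cls a) ++ Bneg (cls c)).
Proof.
  intro H. exists [(1%Z, (a, b, c))]. split; [constructor; auto|].
  intro o. rewrite !coeff_app, !coeff_neg. cbn [ses_combination fold_right]. ring.
Qed.

End Grothendieck.

Ltac coeff_lia := let o := fresh "o" in
  intro o; repeat (rewrite coeff_app || rewrite coeff_neg); lia.

Section GrothendieckAbelian.
Context {C : AbelianCat}.

Lemma Bnull_zero (z : Ob C) : is_zero z -> Bnull (cls z).
Proof.
  intro Hz. apply Bnull_ext with (y := Bneg (cls z ++ Bneg (cls z) ++ Bneg (cls z))); [coeff_lia|].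
  apply Bnull_neg, Bnull_ses, ses_zero, Hz.
Qed.

Lemma Beq_of_coeff (x y z : Belt C) :
  (forall o, coeff x o = (coeff y o + coeff z o)%Z) -> Bnull z -> Beq x y.
Proof. intros E. apply Bnull_ext. intro o. rewrite coeff_app, coeff_neg, E. lia. Qed.

Lemma Ble_of_Beq (x x' y y' : Belt C) : Beq x x' -> Beq y y' -> Ble x' y' -> Ble x y.
Proof.
  intros Nx Ny [S NS]. exists S.
  apply Bnull_ext with (y := Bneg (x ++ Bneg x') ++ (y ++ Bneg y') ++ (y' ++ Bneg x' ++ Bneg (cls S)));
    [coeff_lia|].
  apply Bnull_app; [now apply Bnull_neg|]. now apply Bnull_app.
Qed.

Definition factors_through {a b c d : Ob C} (f : Hom C a b) (g : Hom C c d) : Prop :=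
  exists (t : Hom C a c) (k : Hom C d b), f = comp k (comp g t).

Lemma factors_through_trans {a b c d e f' : Ob C}
  (f : Hom C a b) (g : Hom C c d) (h : Hom C e f') :
  factors_through f g -> factors_through g h -> factors_through f h.
Proof.
  intros [t1 [k1 E1]] [t2 [k2 E2]]. exists (comp t2 t1), (comp k1 k2).
  now rewrite E1, E2, !comp_assoc.
Qed.

Definition factors_equiv {a b c d : Ob C} (f : Hom C a b) (g : Hom C c d) : Prop :=
  factors_through f g /\ factors_through g f.

Hypothesis hab : abelian_normal C.

(* With [u = m e], [e t = m2 e2] and [w m m2 = m3 e3] epi-mono factorizations, [iso] below is
   an isomorphism [im v ~ I3], and [im u / I2 = Q2], [ker (I2 ->> I3) = K3] give
   [im u] = [im v] + [K3] + [Q2] = [im v] + [K3 (+) Q2]. *)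
Lemma Ble_im_of_factors_through {a b c d : Ob C} (v : Hom C a b) (u : Hom C c d) :
  factors_through v u -> Ble (cls (im_obj v)) (cls (im_obj u)).
Proof.
  intros [t [w Ev]].
  destruct (im_obj_spec hab u) as [e [m [He [Hm Eu]]]].
  destruct (im_obj_spec hab v) as [e' [m' [He' [Hm' Ev']]]].
  destruct (image_exists hab (comp e t)) as [I2 [e2 [m2 [He2 [Hm2 E2]]]]].
  destruct (image_exists hab (comp w (comp m m2))) as [I3 [e3 [m3 [He3 [Hm3 E3]]]]].
  assert (Ev2 : comp m3 (comp e3 e2) = comp m' e').
  { rewrite Ev', Ev, comp_assoc, E3, <- !comp_assoc, E2, (comp_assoc _ _ _ _ _ t e m), Eu.
    reflexivity. }
  destruct (epi_mono_lift hab e' m3 (comp e3 e2) m' He' Hm3 Ev2) as [iso [Ed1 Ed2]].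
  assert (dm : mono iso).
  { intros X g h Eg. apply Hm'. now rewrite <- Ed2, <- !comp_assoc, Eg. }
  assert (de : epi iso).
  { intros X g h Eg. apply (epi_comp _ _ _ _ _ He2 He3). now rewrite <- Ed1, !comp_assoc, Eg. }
  destruct (ses_of_mono_epi hab iso dm de) as [Q [SQ ZQ]].
  destruct (ses_of_mono hab m2 Hm2) as [Q2 S2].
  destruct (ses_of_epi e3 He3) as [K3 S3].
  destruct (ses_biprod Q2 K3) as [S SS].
  exists S.
  apply Bnull_ext with (y := (cls (im_obj u) ++ Bneg (cls I2) ++ Bneg (cls Q2)) ++
     (cls I2 ++ Bneg (cls K3) ++ Bneg (cls I3)) ++ (cls I3 ++ Bneg (cls (im_obj v)) ++ Bneg (cls Q))
     ++ cls Q ++ Bneg (cls S ++ Bneg (cls Q2) ++ Bneg (cls K3))); [coeff_lia|].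
  apply Bnull_app; [now apply Bnull_ses|]. apply Bnull_app; [now apply Bnull_ses|].
  apply Bnull_app; [now apply Bnull_ses|]. apply Bnull_app; [now apply Bnull_zero|].
  now apply Bnull_neg, Bnull_ses.
Qed.

End GrothendieckAbelian.

Lemma zsum_map {A B} (g : A -> B) l f : zsum (map g l) f = zsum l (fun x => f (g x)).
Proof. induction l; simpl; [reflexivity|]. unfold zsum in *; simpl. now rewrite IHl. Qed.

Lemma zsum_flat_map {A B} (g : A -> list B) l f :
  zsum (flat_map g l) f = zsum l (fun x => zsum (g x) f).
Proof. induction l; simpl; [reflexivity|]. rewrite zsum_app. unfold zsum in *; simpl. now rewrite IHl. Qed.

Lemma zsum_ext {A} (l : list A) f g : (forall x, In x l -> f x = g x) -> zsum l f = zsum l g.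
Proof.
  induction l; intros H; simpl; [reflexivity|]. unfold zsum in *; simpl.
  rewrite H by now left. rewrite IHl; auto. intros; apply H; now right.
Qed.

Lemma zsum_zero {A} (l : list A) f : (forall x, In x l -> f x = 0%Z) -> zsum l f = 0%Z.
Proof.
  intro H. rewrite (zsum_ext l f (fun _ => 0%Z) H). clear H.
  induction l as [|x l IH]; [reflexivity|exact IH].
Qed.

Lemma zsum_single {A} (l : list A) f k0 :
  NoDup l -> In k0 l -> (forall k, In k l -> k <> k0 -> f k = 0%Z) -> zsum l f = f k0.
Proof.
  induction l as [|x l IH]; intros ND Hin H; [destruct Hin|].
  inversion ND; subst. unfold zsum; simpl. fold (zsum l f).
  destruct Hin as [<-|Hin].
  - rewrite zsum_zero; [ring|]. intros k Hk. apply H; [now right|]. intros ->. contradiction.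
  - rewrite IH; auto. rewrite H; [ring|now left|]. intros ->; contradiction.
    intros; apply H; auto; now right.
Qed.

Lemma zsum_if {A} (l : list A) (c : bool) f :
  zsum l (fun x => if c then f x else 0%Z) = if c then zsum l f else 0%Z.
Proof. destruct c; auto. now apply zsum_zero. Qed.

Lemma zsum_seq_prefix m len a X : (a <= len)%nat ->
  zsum (seq m len) (fun i => if (i <? m + a)%nat then X i else 0%Z) = zsum (seq m a) X.
Proof.
  intro Ha. replace len with (a + (len - a))%nat by lia. rewrite seq_app, zsum_app.
  rewrite (zsum_zero (seq (m + a) (len - a))).
  - rewrite Z.add_0_r. apply zsum_ext. intros x Hx%in_seq.
    destruct (Nat.ltb_spec x (m + a)); [auto|lia].
  - intros x Hx%in_seq. destruct (Nat.ltb_spec x (m + a)); [lia|auto].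
Qed.

Lemma zsum_seq_suffix m len b X : (m <= b)%nat -> (b <= m + len)%nat ->
  zsum (seq m len) (fun j => if (b <=? j)%nat then X j else 0%Z) = zsum (seq b (m + len - b)) X.
Proof.
  intros H1 H2. replace len with ((b - m) + (m + len - b))%nat by lia. rewrite seq_app, zsum_app.
  replace (m + (b - m))%nat with b by lia.
  rewrite (zsum_zero (seq m (b - m))).
  - replace (m + (b - m + (m + len - b)) - b)%nat with (m + len - b)%nat by lia.
    simpl. apply zsum_ext. intros x Hx%in_seq. destruct (Nat.leb_spec b x); [auto|lia].
  - intros x Hx%in_seq. destruct (Nat.leb_spec b x); [lia|auto].
Qed.

Lemma zsum_seq_telescope m len g :
  zsum (seq m len) (fun k => (g k - g (S k))%Z) = (g m - g (m + len)%nat)%Z.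
Proof.
  revert m. induction len; intro m; simpl.
  - rewrite Nat.add_0_r. ring.
  - unfold zsum in *; simpl. rewrite IHlen. replace (S m + len)%nat with (m + S len)%nat by lia. ring.
Qed.

Lemma zsum_seq1_telescope a h :
  zsum (seq 1 a) (fun i => (h i - h (pred i))%Z) = (h a - h 0%nat)%Z.
Proof.
  induction a; [simpl; ring|].
  rewrite seq_S, zsum_app, IHa. unfold zsum; simpl. replace (a + 1)%nat with (S a) by lia. simpl. ring.
Qed.

Lemma NoDup_flat_map {A B} (g : A -> list B) l :
  NoDup l -> (forall x, In x l -> NoDup (g x)) ->
  (forall x y z, In x l -> In y l -> In z (g x) -> In z (g y) -> x = y) -> NoDup (flat_map g l).
Proof.
  induction l as [|x l IH]; intros ND H1 H2; simpl; [constructor|].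
  inversion ND; subst. apply NoDup_app.
  - apply H1; now left.
  - apply IH; auto; intros; [apply H1|eapply H2]; eauto; now right.
  - intros z Hz [y [Hy Hzy]]%in_flat_map.
    assert (x = y) by (eapply H2; eauto; [now left|now right]). now subst.
Qed.

Lemma eqb_eq x y : eqb x y = true <-> x = y.
Proof. unfold eqb. destruct (Req_EM_T x y); split; intro; auto; congruence. Qed.

Lemma eqb_refl x : eqb x x = true.
Proof. now apply eqb_eq. Qed.

Lemma eqb_neq x y : x <> y -> eqb x y = false.
Proof. unfold eqb. destruct (Req_EM_T x y); congruence. Qed.

Lemma leb_iff x y (P : Prop) (c : bool) : (x <= y <-> P) -> (c = true <-> P) -> leb x y = c.
Proof.
  unfold leb. intros H1 H2. destruct (Rle_dec x y) as [L|L], c; auto.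
  - symmetry. now apply H2, H1.
  - exfalso. now apply L, H1, H2.
Qed.

Lemma ltb_true x y : x < y -> ltb x y = true.
Proof. unfold ltb. destruct (Rlt_dec x y); auto; contradiction. Qed.

Lemma find_idx_none s q k :
  (forall i, (1 <= i)%nat -> (i <= k)%nat -> s i <> q) -> find_idx s q k = None.
Proof.
  induction k; intro H; simpl; auto. destruct (Req_EM_T q (s (S k))) as [E|E].
  - exfalso. apply (H (S k)); auto; lia.
  - apply IHk. intros; apply H; lia.
Qed.


Definition strict_incr (n : nat) (s : nat -> R) : Prop :=
  forall i j, (1 <= i)%nat -> (i < j)%nat -> (j <= n)%nat -> s i < s j.

Section Grid.
Variables (n : nat) (s : nat -> R).
Hypothesis Hs : strict_incr n s.

Lemma strict_incr_le i j : (1 <= i)%nat -> (i <= j)%nat -> (j <= n)%nat -> s i <= s j.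
Proof. intros. destruct (Nat.eq_dec i j) as [->|]; [lra|]. left; apply Hs; lia. Qed.

Lemma strict_incr_inj i j : (1 <= i)%nat -> (i <= n)%nat -> (1 <= j)%nat -> (j <= n)%nat ->
  s i = s j -> i = j.
Proof.
  intros. destruct (Nat.lt_total i j) as [L|[L|L]]; auto.
  - assert (s i < s j) by (apply Hs; lia). lra.
  - assert (s j < s i) by (apply Hs; lia). lra.
Qed.

Lemma find_idx_grid b : (1 <= b)%nat -> (b <= n)%nat -> find_idx s (s b) n = Some b.
Proof.
  intros H1 H2. enough (G : forall k, (b <= k)%nat -> (k <= n)%nat -> find_idx s (s b) k = Some b)
    by now apply G.
  induction k; intros K1 K2; [lia|]. simpl. destruct (Req_EM_T (s b) (s (S k))) as [E|E].
  - now rewrite (strict_incr_inj b (S k)) by (auto; lia).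
  - destruct (Nat.eq_dec (S k) b) as [<-|]; [congruence|]. apply IHk; lia.
Qed.

Lemma downward_closed_cut (P : nat -> Prop) :
  (forall i, P i \/ ~ P i) ->
  (forall i j, (1 <= i)%nat -> (i <= j)%nat -> (j <= n)%nat -> P j -> P i) ->
  exists a, (a <= n)%nat /\ forall i, (1 <= i)%nat -> (i <= n)%nat -> (P i <-> (i <= a)%nat).
Proof.
  intros Hd Hm.
  enough (G : forall m, (m <= n)%nat -> exists a, (a <= m)%nat /\
     forall i, (1 <= i)%nat -> (i <= m)%nat -> (P i <-> (i <= a)%nat)).
  { destruct (G n (le_n n)) as [a [Ha Hia]]. eauto. }
  induction m; intro Hmn; [exists 0%nat; split; auto; intros; lia|].
  destruct IHm as [a [Ha Hia]]; [lia|]. destruct (Hd (S m)) as [HP|HP].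
  - exists (S m). split; auto. intros i H1 H2. split; intro; [lia|]. apply (Hm i (S m)); auto.
  - exists a. split; [lia|]. intros i H1 H2. destruct (Nat.eq_dec i (S m)) as [->|].
    + split; intro; [contradiction|lia].
    + apply Hia; lia.
Qed.

Lemma grid_cut_le p : exists a, (a <= n)%nat /\
  forall i, (1 <= i)%nat -> (i <= n)%nat -> (s i <= p <-> (i <= a)%nat).
Proof.
  apply downward_closed_cut.
  - intro i. destruct (Rle_dec (s i) p); auto.
  - intros i j H1 H2 H3 H. eapply Rle_trans; [|exact H]. now apply strict_incr_le.
Qed.

Lemma grid_cut_ge q : exists b, (1 <= b)%nat /\ (b <= S n)%nat /\
  forall j, (1 <= j)%nat -> (j <= n)%nat -> (q <= s j <-> (b <= j)%nat).
Proof.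
  destruct (downward_closed_cut (fun i => s i < q)) as [a [Ha Hia]].
  - intro i. destruct (Rlt_dec (s i) q); auto.
  - intros i j H1 H2 H3 H. eapply Rle_lt_trans; [|exact H]. now apply strict_incr_le.
  - exists (S a). split; [lia|]. split; [lia|]. intros j H1 H2. specialize (Hia j H1 H2).
    destruct (Rlt_dec (s j) q) as [L|L]; split; intro; try lra; try lia.
    + apply Hia in L. lia.
    + destruct (le_lt_dec (S a) j); auto. exfalso. apply L, Hia. lia.
Qed.

Lemma grid_cut_le_succ p a : (a < n)%nat ->
  (forall i, (1 <= i)%nat -> (i <= n)%nat -> (s i <= p <-> (i <= a)%nat)) -> p < s (S a).
Proof.
  intros Ha HA. destruct (Rlt_dec p (s (S a))) as [L|L]; auto.
  assert (S a <= a)%nat by (apply HA; lia || lra). lia.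
Qed.

Lemma grid_cut_ge_pred q b : (2 <= b)%nat -> (b <= S n)%nat ->
  (forall j, (1 <= j)%nat -> (j <= n)%nat -> (q <= s j <-> (b <= j)%nat)) -> s (pred b) < q.
Proof.
  intros Hb1 Hb2 HB. destruct (Rlt_dec (s (pred b)) q) as [L|L]; auto.
  assert (b <= pred b)%nat by (apply HB; lia || lra). lia.
Qed.

End Grid.

Lemma sx_grid n s i : (1 <= i)%nat -> (i <= n)%nat -> sx n s i = s i.
Proof.
  intros. unfold sx. destruct (Nat.eqb_spec i 0); [lia|]. destruct (Nat.eqb_spec i (S n)); [lia|]. auto.
Qed.

Lemma sx_top n s : sx n s (S n) = s n + 1.
Proof. unfold sx. simpl. now rewrite Nat.eqb_refl. Qed.

Definition FB_support_fin n (s : nat -> R) : list interval :=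
  flat_map (fun i => map (fun j => Fin (s i) (s j)) (seq (S i) (n - i))) (seq 1 n).
Definition FB_support_inf n (s : nat -> R) : list interval := map (fun i => Inf (s i)) (seq 1 n).
Definition FB_support n s := FB_support_fin n s ++ FB_support_inf n s.

Lemma upsum_coeff {C : AbelianCat} (Y : diagram C) L I o :
  coeff (upsum Y L I) o =
  zsum L (fun J => if validb J && containsb J I then coeff (Y J) o else 0%Z).
Proof.
  unfold upsum. rewrite coeff_flat_map. apply zsum_ext. intros J _.
  now destruct (validb J && containsb J I).
Qed.

Section MobiusInversion.
Context {C : AbelianCat} (F : PMod C) (n : nat) (s : nat -> R).
Hypothesis Hs : strict_incr n s.

Definition dFB_grid_fin (o : Ob C) (i j : nat) : Z := coeff (dFB F n s (Fin (sx n s i) (sx n s j))) o.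
Definition dFB_grid_inf (o : Ob C) (i : nat) : Z := coeff (dFB F n s (Inf (sx n s i))) o.

Lemma coeff_FB_grid_fin o i j : (1 <= i)%nat -> (i < j)%nat -> (j <= n)%nat ->
  coeff (FB F n s (Fin (s i) (s j))) o =
  (dFB_grid_fin o i j - dFB_grid_fin o i (S j)
   + dFB_grid_fin o (pred i) (S j) - dFB_grid_fin o (pred i) j)%Z.
Proof.
  intros H1 H2 H3. unfold FB. rewrite coeff_flat_map, (zsum_single _ _ i).
  - rewrite coeff_flat_map, (zsum_single _ _ j).
    + rewrite !eqb_refl. cbn [andb]. rewrite !coeff_app, !coeff_neg. unfold dFB_grid_fin. lia.
    + apply seq_NoDup.
    + apply in_seq; lia.
    + intros k Hk%in_seq Hne. rewrite (eqb_neq (s j) (s k)); [now rewrite andb_false_r|].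
      intro E. apply Hne. symmetry. apply (strict_incr_inj n s Hs); auto; lia.
  - apply seq_NoDup.
  - apply in_seq; lia.
  - intros k Hk%in_seq Hne. rewrite coeff_flat_map. apply zsum_zero. intros x _.
    rewrite (eqb_neq (s i) (s k)); [reflexivity|].
    intro E. apply Hne. symmetry. apply (strict_incr_inj n s Hs); auto; lia.
Qed.

Lemma coeff_FB_grid_inf o i : (1 <= i)%nat -> (i <= n)%nat ->
  coeff (FB F n s (Inf (s i))) o = (dFB_grid_inf o i - dFB_grid_inf o (pred i))%Z.
Proof.
  intros H1 H2. unfold FB. rewrite coeff_flat_map, (zsum_single _ _ i).
  - rewrite eqb_refl, coeff_app, coeff_neg. unfold dFB_grid_inf. rewrite (sx_grid n s i) by lia. lia.
  - apply seq_NoDup.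
  - apply in_seq; lia.
  - intros k Hk%in_seq Hne. rewrite (eqb_neq (s i) (s k)); [reflexivity|].
    intro E. apply Hne. symmetry. apply (strict_incr_inj n s Hs); auto; lia.
Qed.

Lemma fin_supp_FB : fin_supp (FB F n s) (FB_support n s).
Proof.
  split.
  - apply NoDup_app.
    + apply NoDup_flat_map; [apply seq_NoDup| |].
      * intros i Hi%in_seq. apply NoDup_map_NoDup_ForallPairs; [|apply seq_NoDup].
        intros j j' Hj%in_seq Hj'%in_seq E. injection E as E.
        apply (strict_incr_inj n s Hs); auto; lia.
      * intros i i' z Hi%in_seq Hi'%in_seq [j [<- Hj]]%in_map_iff [j' [E Hj']]%in_map_iff.
        injection E as E _. symmetry. apply (strict_incr_inj n s Hs); auto; lia.
    + apply NoDup_map_NoDup_ForallPairs; [|apply seq_NoDup].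
      intros j j' Hj%in_seq Hj'%in_seq E. injection E as E.
      apply (strict_incr_inj n s Hs); auto; lia.
    + intros z [i [_ [j [<- _]]%in_map_iff]]%in_flat_map [k [E _]]%in_map_iff. discriminate.
  - intros J _ HJ. apply Bnull_ext with (y := []); [|apply Bnull_nil].
    intro o. destruct J as [p q|p]; unfold FB; rewrite coeff_flat_map; apply zsum_zero.
    + intros i Hi. rewrite coeff_flat_map. apply zsum_zero. intros j Hj. cbv beta.
      destruct (eqb p (s i) && eqb q (s j)) eqn:E; [|reflexivity]. exfalso. apply HJ.
      apply andb_true_iff in E as [->%eqb_eq ->%eqb_eq].
      apply in_or_app. left. apply in_flat_map. exists i. split; auto. apply in_map_iff. eauto.
    + intros i Hi. cbv beta. destruct (eqb p (s i)) eqn:E; [|reflexivity]. exfalso. apply HJ.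
      apply eqb_eq in E as ->. apply in_or_app. right. apply in_map_iff. eauto.
Qed.

(* Inclusion-exclusion over the grid: with [a] (resp. [b]) the number of grid points [<= p]
   (resp. the first grid index [>= q]), the Möbius inversion telescopes in both indices. *)
Lemma coeff_upsum_FB_fin o p q a b : (a <= n)%nat -> (a < b)%nat -> (b <= S n)%nat ->
  (forall i, (1 <= i)%nat -> (i <= n)%nat -> (s i <= p <-> (i <= a)%nat)) ->
  (forall j, (1 <= j)%nat -> (j <= n)%nat -> (q <= s j <-> (b <= j)%nat)) ->
  coeff (upsum (FB F n s) (FB_support n s) (Fin p q)) o =
  (dFB_grid_fin o a b - dFB_grid_fin o a (S n) - dFB_grid_fin o 0 b + dFB_grid_fin o 0 (S n)
   + dFB_grid_inf o a - dFB_grid_inf o 0)%Z.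
Proof.
  intros Ha Hab Hb HA HB. rewrite upsum_coeff. unfold FB_support.
  rewrite zsum_app. unfold FB_support_fin, FB_support_inf. rewrite zsum_flat_map, zsum_map.
  transitivity (zsum (seq 1 n) (fun i => if (i <? 1 + a)%nat then
     zsum (seq (S i) (n - i)) (fun j => if (b <=? j)%nat then
     (dFB_grid_fin o i j - dFB_grid_fin o i (S j)
      + dFB_grid_fin o (pred i) (S j) - dFB_grid_fin o (pred i) j)%Z else 0%Z)
     else 0%Z) +
     zsum (seq 1 n) (fun i => if (i <? 1 + a)%nat
       then (dFB_grid_inf o i - dFB_grid_inf o (pred i))%Z else 0%Z))%Z.
  - f_equal; apply zsum_ext; intros i Hi%in_seq; [rewrite zsum_map|]; cbn [validb containsb].
    + rewrite <- zsum_if. apply zsum_ext. intros j Hj%in_seq. cbn [validb containsb].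
      rewrite ltb_true by (apply Hs; lia).
      rewrite (leb_iff (s i) p (i <= a)%nat (i <? 1 + a)%nat)
        by first [apply HA; lia | rewrite Nat.ltb_lt; lia].
      rewrite (leb_iff q (s j) (b <= j)%nat (b <=? j)%nat)
        by first [apply HB; lia | rewrite Nat.leb_le; lia].
      destruct (i <? 1 + a)%nat, (b <=? j)%nat; try reflexivity. apply coeff_FB_grid_fin; lia.
    + rewrite (leb_iff (s i) p (i <= a)%nat (i <? 1 + a)%nat)
        by first [apply HA; lia | rewrite Nat.ltb_lt; lia].
      destruct (i <? 1 + a)%nat; [apply coeff_FB_grid_inf; lia|reflexivity].
  - rewrite !zsum_seq_prefix by lia.
    rewrite (zsum_ext (seq 1 a) _ (fun i =>
       ((dFB_grid_fin o i b - dFB_grid_fin o i (S n))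
        - (dFB_grid_fin o (pred i) b - dFB_grid_fin o (pred i) (S n)))%Z)).
    + rewrite (zsum_seq1_telescope a (fun i => (dFB_grid_fin o i b - dFB_grid_fin o i (S n))%Z)).
      rewrite zsum_seq1_telescope. lia.
    + intros i Hi%in_seq. rewrite zsum_seq_suffix by lia.
      rewrite (zsum_ext _ _ (fun j => ((dFB_grid_fin o i j - dFB_grid_fin o (pred i) j) -
          (dFB_grid_fin o i (S j) - dFB_grid_fin o (pred i) (S j)))%Z)) by (intros; lia).
      rewrite zsum_seq_telescope. replace (b + (S i + (n - i) - b))%nat with (S n) by lia. lia.
Qed.

Lemma coeff_upsum_FB_inf o p a : (a <= n)%nat ->
  (forall i, (1 <= i)%nat -> (i <= n)%nat -> (s i <= p <-> (i <= a)%nat)) ->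
  coeff (upsum (FB F n s) (FB_support n s) (Inf p)) o = (dFB_grid_inf o a - dFB_grid_inf o 0)%Z.
Proof.
  intros Ha HA. rewrite upsum_coeff. unfold FB_support.
  rewrite zsum_app. unfold FB_support_fin, FB_support_inf. rewrite zsum_flat_map, zsum_map.
  rewrite zsum_zero.
  2:{ intros i _. rewrite zsum_map. apply zsum_zero. intros j _. cbn [containsb].
      now rewrite andb_false_r. }
  transitivity (zsum (seq 1 n) (fun i => if (i <? 1 + a)%nat
    then (dFB_grid_inf o i - dFB_grid_inf o (pred i))%Z else 0%Z)).
  - apply zsum_ext. intros i Hi%in_seq. cbn [validb containsb andb].
    rewrite (leb_iff (s i) p (i <= a)%nat (i <? 1 + a)%nat)
      by first [apply HA; lia | rewrite Nat.ltb_lt; lia].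
    destruct (i <? 1 + a)%nat; [apply coeff_FB_grid_inf; lia|reflexivity].
  - rewrite zsum_seq_prefix, zsum_seq1_telescope by lia. lia.
Qed.

End MobiusInversion.

Section Modules.
Context {C : AbelianCat} (F : PMod C).

Definition iso_on (P : R -> Prop) : Prop :=
  forall x y (h : x <= y), P x -> P y -> is_iso (Fmap F h).

Lemma Fmap_factor_iso_on P x u m (hu : x <= u) (hm : x <= m) :
  iso_on P -> P u -> P m -> exists K, Fmap F hu = comp K (Fmap F hm).
Proof.
  intros Hiso Pu Pm. destruct (Rle_dec m u) as [Hmu|Hmu].
  - exists (Fmap F Hmu). apply Fmap_comp.
  - assert (Hum : u <= m) by lra.
    destruct (Hiso u m Hum Pu Pm) as [r [Hr1 Hr2]]. exists r.
    now rewrite (Fmap_comp F hu Hum hm), comp_assoc, Hr1, comp_idl.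
Qed.

(* Both maps agree with [F(x <= u)] up to isomorphisms on either side. *)
Lemma factors_equiv_iso_on P x p u y (hxp : x <= p) (hu : p <= u) (hy : x <= y) :
  is_iso (Fmap F hxp) -> iso_on P -> P u -> P y -> factors_equiv (Fmap F hu) (Fmap F hy).
Proof.
  intros [r [Hr1 Hr2]] Hiso Pu Py.
  assert (hxu : x <= u) by lra.
  destruct (Fmap_factor_iso_on P x u y hxu hy Hiso Pu Py) as [K1 E1].
  destruct (Fmap_factor_iso_on P x y u hy hxu Hiso Py Pu) as [K2 E2].
  split.
  - exists r, K1.
    now rewrite comp_assoc, <- E1, (Fmap_comp F hxp hu hxu), <- comp_assoc, Hr2, comp_idr.
  - exists (Fmap F hxp), K2. now rewrite <- (Fmap_comp F hxp hu hxu).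
Qed.

Lemma factors_equiv_zero p u (hu : p <= u) (hp : p <= p) :
  is_zero (Fob F p) -> factors_equiv (Fmap F hu) (Fmap F hp).
Proof.
  intro Hz. split.
  - exists (idm _), (Fmap F hu). now rewrite Fmap_id, !comp_idr.
  - exists (idm _), (hzero _ _). now apply is_zero_hom_from.
Qed.

Lemma imc_cls x y : x <= y -> exists h : x <= y, imc F x y = cls (im_obj (Fmap F h)).
Proof. intro H. unfold imc. destruct (Rle_dec x y); [eauto|contradiction]. Qed.

End Modules.

Section Constructible.
Context {C : AbelianCat} (hab : abelian_normal C) (F : PMod C) (n : nat) (s : nat -> R).
Hypothesis hF : constructible F n s.

Lemma constructible_strict_incr : strict_incr n s.
Proof.
  destruct hF as [_ [Hs _]]. intros i j Hi Hij Hj.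
  induction j as [|j IH]; [lia|].
  destruct (Nat.eq_dec i j) as [->|]; [apply Hs; lia|].
  apply Rlt_trans with (s j); [apply IH; lia | apply Hs; lia].
Qed.

Lemma constructible_iso_on_cell i : (1 <= i)%nat -> (i < n)%nat ->
  iso_on F (fun z => s i <= z < s (S i)).
Proof. destruct hF as [_ [_ [_ [H _]]]]. intros Hi Hin x y h Px Py. apply (H i); tauto. Qed.

Lemma constructible_iso_on_top : iso_on F (fun z => s n <= z).
Proof. destruct hF as [_ [_ [_ [_ H]]]]. intros x y h Px _. now apply H. Qed.

Lemma Bnull_imc_below p r : p < s 1%nat -> Bnull (imc F p r).
Proof.
  intro Hp. unfold imc. destruct (Rle_dec p r); [|apply Bnull_nil].
  apply Bnull_zero, (im_obj_zero hab). now apply hF.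
Qed.

Lemma Bnull_dFB_grid_fin_bottom j : Bnull (dFB F n s (Fin (sx n s 0) (sx n s j))).
Proof.
  unfold dFB. destruct (find_idx s (sx n s j) n); apply Bnull_imc_below; cbn; lra.
Qed.

Lemma Bnull_dFB_grid_inf_bottom : Bnull (dFB F n s (Inf (sx n s 0))).
Proof. apply Bnull_imc_below. cbn. lra. Qed.

Lemma dFB_grid_fin_top a : (1 <= a)%nat -> (a <= n)%nat ->
  dFB F n s (Fin (sx n s a) (sx n s (S n))) = dFB F n s (Inf (sx n s a)).
Proof.
  intros H1 H2. pose proof constructible_strict_incr as Hs.
  unfold dFB. rewrite sx_top, (sx_grid n s a) by lia. rewrite find_idx_none.
  - rewrite Rmax_right; auto. now apply (strict_incr_le n).
  - intros i Hi1 Hi2 E. assert (s i <= s n) by (apply (strict_incr_le n); auto; lia). lra.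
Qed.

Lemma dFB_grid_fin_inner a b : (1 <= a)%nat -> (a < b)%nat -> (b <= n)%nat ->
  dFB F n s (Fin (sx n s a) (sx n s b)) = imc F (s a) ((Rmax (s a) (s (pred b)) + s b) / 2).
Proof.
  intros H1 H2 H3. unfold dFB. rewrite (sx_grid n s a), (sx_grid n s b) by lia.
  rewrite find_idx_grid by (auto using constructible_strict_incr; lia). unfold prev_bound.
  now destruct (Nat.eqb_spec b 1); [lia|].
Qed.

End Constructible.

Definition left_end (I : interval) : R := match I with Fin p _ | Inf p => p end.

Definition near_right_end (I : interval) (P : R -> Prop) : Prop :=
  match I with
  | Fin _ q => exists eta, 0 < eta /\ forall u, q - eta < u < q -> P u
  | Inf _ => exists M, forall u, M <= u -> P u
  end.

Lemma near_right_end_Grow eps I P Q : 0 <= eps -> valid I ->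
  near_right_end I P -> near_right_end (Grow eps I) Q ->
  exists w, left_end I <= w /\ P w /\ Q (w + eps).
Proof.
  intros He HI HP HQ. destruct I as [p q|p]; cbn in *.
  - destruct HP as [e1 [He1 HP]], HQ as [e2 [He2 HQ]].
    set (eta := Rmin (Rmin e1 e2) (q - p) / 2).
    assert (0 < Rmin (Rmin e1 e2) (q - p)) by (repeat apply Rmin_glb_lt; lra).
    pose proof (Rmin_l (Rmin e1 e2) (q - p)). pose proof (Rmin_r (Rmin e1 e2) (q - p)).
    pose proof (Rmin_l e1 e2). pose proof (Rmin_r e1 e2).
    exists (q - eta). unfold eta. split; [lra|]. split; [apply HP|apply HQ]; lra.
  - destruct HP as [M1 HP], HQ as [M2 HQ]. exists (Rmax p (Rmax M1 M2)).
    pose proof (Rmax_l p (Rmax M1 M2)). pose proof (Rmax_r p (Rmax M1 M2)).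
    pose proof (Rmax_l M1 M2). pose proof (Rmax_r M1 M2).
    split; [lra|]. split; [apply HP|apply HQ]; lra.
Qed.

Section Represent.
Context {C : AbelianCat} (hab : abelian_normal C) (F : PMod C) (n : nat) (s : nat -> R).
Hypothesis hF : constructible F n s.

Let Hs : strict_incr n s := constructible_strict_incr F n s hF.
Let Hn : (1 <= n)%nat := proj1 hF.

Lemma iso_from_grid_cut a p : (1 <= a)%nat -> (a <= n)%nat ->
  (forall i, (1 <= i)%nat -> (i <= n)%nat -> (s i <= p <-> (i <= a)%nat)) ->
  forall h : s a <= p, is_iso (Fmap F h).
Proof.
  intros H1 H2 HA h. assert (Hap : s a <= p) by (apply HA; lia).
  destruct (Nat.eq_dec a n) as [->|Hne].
  - apply (constructible_iso_on_top F n s hF); lra.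
  - assert (Hp : p < s (S a)) by (apply (grid_cut_le_succ n s); auto; lia).
    assert (s a < s (S a)) by (apply Hs; lia).
    apply (constructible_iso_on_cell F n s hF a); lra || lia.
Qed.

Lemma represent_below p (Y : Belt C) : p < s 1%nat -> (forall o, coeff Y o = 0%Z) ->
  Beq Y (cls (im_obj (Fmap F (Rle_refl p)))) /\
  forall u (hu : p <= u), factors_equiv (Fmap F hu) (Fmap F (Rle_refl p)).
Proof.
  intros Hp HY. assert (Hz : is_zero (Fob F p)) by now apply hF.
  split.
  - apply (Beq_of_coeff _ _ (Bneg (cls (im_obj (Fmap F (Rle_refl p)))))).
    + intro o. rewrite coeff_neg, HY. lia.
    + now apply Bnull_neg, Bnull_zero, (im_obj_zero hab).
  - intros u hu. now apply factors_equiv_zero.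
Qed.

Lemma represent_top a p : (1 <= a)%nat -> (a <= n)%nat ->
  (forall i, (1 <= i)%nat -> (i <= n)%nat -> (s i <= p <-> (i <= a)%nat)) ->
  exists h : s a <= Rmax (s a) (s n) + 1,
    dFB F n s (Inf (sx n s a)) = cls (im_obj (Fmap F h)) /\
    forall u (hu : p <= u), Rmax p (s n) <= u -> factors_equiv (Fmap F hu) (Fmap F h).
Proof.
  intros H1 H2 HA.
  pose proof (Rmax_l (s a) (s n)). pose proof (Rmax_r (s a) (s n)).
  pose proof (Rmax_l p (s n)). pose proof (Rmax_r p (s n)).
  destruct (imc_cls F (s a) (Rmax (s a) (s n) + 1)) as [h Eh]; [lra|].
  exists h. split; [unfold dFB; now rewrite (sx_grid n s a) by lia|].
  intros u hu Hu. assert (hxp : s a <= p) by (apply HA; lia).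
  apply (factors_equiv_iso_on F (fun z => s n <= z) _ _ _ _ hxp);
    [now apply iso_from_grid_cut | apply (constructible_iso_on_top F n s hF) | lra | lra].
Qed.

Lemma represent_inner a b p q : (1 <= a)%nat -> (a < b)%nat -> (b <= n)%nat ->
  (forall i, (1 <= i)%nat -> (i <= n)%nat -> (s i <= p <-> (i <= a)%nat)) ->
  p < q -> s (pred b) < q -> q <= s b ->
  exists y (h : s a <= y),
    dFB F n s (Fin (sx n s a) (sx n s b)) = cls (im_obj (Fmap F h)) /\
    near_right_end (Fin p q) (fun u => forall hu : p <= u, factors_equiv (Fmap F hu) (Fmap F h)).
Proof.
  intros H1 H2 H3 HA Hpq Hsb Hqb. set (y := (Rmax (s a) (s (pred b)) + s b) / 2).
  assert (s a < s b) by (apply Hs; lia). assert (s (pred b) < s b) by (apply Hs; lia).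
  pose proof (Rmax_l (s a) (s (pred b))). pose proof (Rmax_r (s a) (s (pred b))).
  pose proof (Rmax_l p (s (pred b))). pose proof (Rmax_r p (s (pred b))).
  assert (Rmax (s a) (s (pred b)) < s b) by (apply Rmax_lub_lt; lra).
  assert (Rmax p (s (pred b)) < q) by (apply Rmax_lub_lt; lra).
  destruct (imc_cls F (s a) y) as [h Eh]; [unfold y; lra|].
  exists y, h. split; [now rewrite dFB_grid_fin_inner by (auto; lia)|].
  exists (q - Rmax p (s (pred b))). split; [lra|]. intros u Hu hu.
  assert (hxp : s a <= p) by (apply HA; lia).
  assert (Hcell := constructible_iso_on_cell F n s hF (pred b) ltac:(lia) ltac:(lia)).
  replace (S (pred b)) with b in Hcell by lia.
  apply (factors_equiv_iso_on F _ _ _ _ _ hxp _ _ (iso_from_grid_cut a p H1 ltac:(lia) HA hxp) Hcell);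
    unfold y; lra.
Qed.

Lemma represent_fin p q : p < q ->
  exists x y (h : x <= y),
    Beq (upsum (FB F n s) (FB_support n s) (Fin p q)) (cls (im_obj (Fmap F h))) /\
    near_right_end (Fin p q) (fun u => forall hu : p <= u, factors_equiv (Fmap F hu) (Fmap F h)).
Proof.
  intro Hpq.
  destruct (grid_cut_le n s Hs p) as [a [Ha HA]].
  destruct (grid_cut_ge n s Hs q) as [b [Hb1 [Hb2 HB]]].
  assert (Hab : (a < b)%nat).
  { destruct (le_lt_dec b a) as [L|L]; auto.
    assert (s b <= p) by (apply HA; lia). assert (q <= s b) by (apply HB; lia). lra. }
  pose proof (fun o => coeff_upsum_FB_fin F n s Hs o p q a b Ha Hab Hb2 HA HB) as Hup.
  destruct (Nat.eq_dec a 0) as [->|Ha0].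
  - assert (Hp : p < s 1%nat) by (apply (grid_cut_le_succ n s p 0); auto; lia).
    destruct (represent_below p _ Hp (fun o => ltac:(rewrite Hup; lia))) as [E W].
    exists p, p, (Rle_refl p). split; [exact E|]. exists (q - p). split; [lra|]. intros u Hu hu. apply W.
  - destruct (Nat.eq_dec b (S n)) as [->|Hbn].
    + destruct (represent_top a p ltac:(lia) Ha HA) as [h [Eh W]].
      assert (Hsn : s n < q) by (apply (grid_cut_ge_pred n s q (S n)); auto; lia).
      exists (s a), (Rmax (s a) (s n) + 1), h. split.
      * apply (Beq_of_coeff _ _ (Bneg (dFB F n s (Inf (sx n s 0)))));
          [|apply Bnull_neg, (Bnull_dFB_grid_inf_bottom hab F n s hF)].
        intro o. rewrite coeff_neg, Hup, <- Eh. unfold dFB_grid_inf. lia.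
      * pose proof (Rmax_l p (s n)). pose proof (Rmax_r p (s n)).
        exists (q - Rmax p (s n)). split; [apply Rlt_0_minus, Rmax_lub_lt; lra|].
        intros u Hu hu. apply W. lra.
    + destruct (represent_inner a b p q ltac:(lia) Hab ltac:(lia) HA Hpq
        ltac:(apply (grid_cut_ge_pred n s); auto; lia) ltac:(apply HB; lia)) as [y [h [Eh W]]].
      exists (s a), y, h. split; [|exact W].
      apply (Beq_of_coeff _ _ (Bneg (dFB F n s (Fin (sx n s 0) (sx n s b))) ++
          dFB F n s (Fin (sx n s 0) (sx n s (S n))) ++ Bneg (dFB F n s (Inf (sx n s 0))))).
      * intro o. rewrite Hup, <- Eh. unfold dFB_grid_fin, dFB_grid_inf.
        rewrite (dFB_grid_fin_top F n s hF a) by lia.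
        repeat (rewrite coeff_app || rewrite coeff_neg). lia.
      * apply Bnull_app; [apply Bnull_neg, (Bnull_dFB_grid_fin_bottom hab F n s hF)|].
        apply Bnull_app; [apply (Bnull_dFB_grid_fin_bottom hab F n s hF)|].
        apply Bnull_neg, (Bnull_dFB_grid_inf_bottom hab F n s hF).
Qed.

Lemma represent_inf p :
  exists x y (h : x <= y),
    Beq (upsum (FB F n s) (FB_support n s) (Inf p)) (cls (im_obj (Fmap F h))) /\
    near_right_end (Inf p) (fun u => forall hu : p <= u, factors_equiv (Fmap F hu) (Fmap F h)).
Proof.
  destruct (grid_cut_le n s Hs p) as [a [Ha HA]].
  pose proof (fun o => coeff_upsum_FB_inf F n s Hs o p a Ha HA) as Hup.
  destruct (Nat.eq_dec a 0) as [->|Ha0].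
  - assert (Hp : p < s 1%nat) by (apply (grid_cut_le_succ n s p 0); auto; lia).
    destruct (represent_below p _ Hp (fun o => ltac:(rewrite Hup; lia))) as [E W].
    exists p, p, (Rle_refl p). split; [exact E|]. exists p. intros u _ hu. apply W.
  - destruct (represent_top a p ltac:(lia) Ha HA) as [h [Eh W]].
    exists (s a), (Rmax (s a) (s n) + 1), h. split.
    + apply (Beq_of_coeff _ _ (Bneg (dFB F n s (Inf (sx n s 0)))));
        [|apply Bnull_neg, (Bnull_dFB_grid_inf_bottom hab F n s hF)].
      intro o. rewrite coeff_neg, Hup, <- Eh. unfold dFB_grid_inf. lia.
    + exists (Rmax p (s n)). intros u Hu hu. now apply W.
Qed.

Lemma represent_upsum_FB I : valid I ->
  exists x y (h : x <= y),
    Beq (upsum (FB F n s) (FB_support n s) I) (cls (im_obj (Fmap F h))) /\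
    near_right_end I (fun u => forall hu : left_end I <= u, factors_equiv (Fmap F hu) (Fmap F h)).
Proof. destruct I as [p q|p]; intro HI; [now apply represent_fin | apply represent_inf]. Qed.

End Represent.

Lemma interleaved_sym {C : AbelianCat} (F G : PMod C) eps :
  interleaved F G eps -> interleaved G F eps.
Proof. intros [phi [psi [H1 [H2 [H3 H4]]]]]. exists psi, phi. auto. Qed.

(* [G(p' <= w') = G(w + eps <= w') o phi_w o F(p' + eps <= w) o psi_p'] by naturality of [phi]
   and the triangle identity for [psi] then [phi]. *)
Lemma interleaved_factors_through {C : AbelianCat} (F G : PMod C) eps :
  0 <= eps -> interleaved F G eps -> forall p' w' p w (h' : p' <= w') (h : p <= w),
  p' + eps <= p -> w + eps <= w' -> factors_through (Fmap G h') (Fmap F h).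
Proof.
  intros He [phi [psi [Nphi [_ [_ Tri]]]]] p' w' p w h' h Hp Hw.
  assert (h2 : p' <= p' + eps + eps) by lra.
  assert (h3 : p' + eps + eps <= w + eps) by lra.
  assert (h4 : w + eps <= w') by lra.
  assert (h5 : p' + eps <= w) by lra.
  assert (h6 : p' + eps <= p) by lra.
  exists (comp (Fmap F h6) (psi p')), (comp (Fmap G h4) (phi w)).
  rewrite (Fmap_comp G h2 (Rle_trans _ _ _ h3 h4) h'), (Fmap_comp G h3 h4), <- (Tri p' h2).
  rewrite <- !comp_assoc, (comp_assoc _ _ _ _ _ (psi p') (phi (p' + eps)) (Fmap G h3)).
  rewrite (Nphi (p' + eps) w h5 h3), (Fmap_comp F h6 h h5). now rewrite !comp_assoc.
Qed.

Lemma Grow_opp eps J : Grow eps (Grow (- eps) J) = J.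
Proof. destruct J; cbn; f_equal; ring. Qed.

Lemma fin_supp_nabla {C : AbelianCat} (Y : diagram C) L eps : 0 <= eps -> fin_supp Y L ->
  fin_supp (nabla eps Y) (map (Grow (- eps)) L).
Proof.
  intros He [ND HN]. split.
  - apply NoDup_map_NoDup_ForallPairs; auto. intros x y _ _ E.
    now rewrite <- (Grow_opp eps x), <- (Grow_opp eps y), E.
  - intros J HJ Hn. apply HN.
    + destruct J; cbn in *; lra || auto.
    + intro Hin. apply Hn. rewrite <- (Grow_opp (- eps) J), Ropp_involutive. now apply in_map.
Qed.

Lemma upsum_nabla {C : AbelianCat} (Y : diagram C) L eps I : 0 <= eps -> valid I ->
  upsum (nabla eps Y) (map (Grow (- eps)) L) I = upsum Y L (Grow eps I).
Proof.
  intros He HI. unfold upsum. induction L as [|J L IH]; cbn; auto. rewrite IH. f_equal.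
  unfold nabla. rewrite Grow_opp.
  replace (validb (Grow (- eps) J) && containsb (Grow (- eps) J) I)
    with (validb J && containsb J (Grow eps I)); auto.
  destruct J as [a b|a], I as [p q|p]; cbn in *; unfold ltb, leb;
    repeat destruct (Rle_dec _ _); repeat destruct (Rlt_dec _ _); cbn; auto; lra.
Qed.

Lemma diag_mor_of_interleaved {C : AbelianCat} (hab : abelian_normal C) (F G : PMod C)
  nF sF nG sG eps : constructible F nF sF -> constructible G nG sG -> 0 <= eps ->
  interleaved F G eps -> diag_mor (nabla eps (FB G nG sG)) (FB F nF sF).
Proof.
  intros hF hG He Hint.
  exists (map (Grow (- eps)) (FB_support nG sG)), (FB_support nF sF).
  split; [apply fin_supp_nabla, fin_supp_FB, (constructible_strict_incr G); auto|].
  split; [apply fin_supp_FB, (constructible_strict_incr F); auto|].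
  intros I HI _. rewrite upsum_nabla by auto.
  assert (HgI : valid (Grow eps I)) by (destruct I; cbn in *; lra || auto).
  destruct (represent_upsum_FB hab G nG sG hG (Grow eps I) HgI) as [xG [yG [rG [EG WG]]]].
  destruct (represent_upsum_FB hab F nF sF hF I HI) as [xF [yF [rF [EF WF]]]].
  destruct (near_right_end_Grow eps I _ _ He HI WF WG) as [w [hw [FF GG]]].
  assert (hw' : left_end (Grow eps I) <= w + eps) by (destruct I; cbn in *; lra).
  apply (Ble_of_Beq _ _ _ _ EG EF), (Ble_im_of_factors_through hab).
  apply (factors_through_trans _ _ _ (proj2 (GG hw'))).
  refine (factors_through_trans _ _ _ _ (proj1 (FF hw))).
  apply (interleaved_factors_through F G eps He Hint); [destruct I; cbn|]; lra.
Qed.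

Lemma Glb_Rbar_le_of_subset (E1 E2 : R -> Prop) :
  (forall x, E2 x -> E1 x) -> Rbar_le (Glb_Rbar E1) (Glb_Rbar E2).
Proof.
  intro H. destruct (Glb_Rbar_correct E1) as [L1 _]. destruct (Glb_Rbar_correct E2) as [_ G2].
  apply G2. intros x Hx. apply L1, H, Hx.
Qed.

Theorem theorem8p2 (C : AbelianCat) (hab : abelian_normal C) (hconc : concrete C)
  (F G : PMod C) (nF : nat) (sF : nat -> R) (nG : nat) (sG : nat -> R)
  (hF : constructible F nF sF) (hG : constructible G nG sG) :
  Rbar_le (d_E (FB F nF sF) (FB G nG sG)) (d_I F G).
Proof.
  apply Glb_Rbar_le_of_subset. intros eps [He Hint]. split; [exact He|]. split.
  - now apply diag_mor_of_interleaved.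
  - now apply diag_mor_of_interleaved, interleaved_sym.
Qed.
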